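(* Let $\mathsf{M}_{\rho_0}[\boldsymbol{\beta},\boldsymbol{\alpha}]\triangleq\mathbb{E}_{\rho_0(\mathbf{x})}[\boldsymbol{\beta}(\mathbf{x})\boldsymbol{\alpha}(\mathbf{x})^\intercal]$. Let $\mathbf{z}\in\mathbb{C}^r$ be a left eigenvector of $\mathsf{M}_{\rho_0}[\boldsymbol{\beta},\boldsymbol{\alpha}]$ with eigenvalue $\lambda\in\mathbb{C}$, i.e., $\mathbf{z}^*\mathsf{M}_{\rho_0}[\boldsymbol{\beta},\boldsymbol{\alpha}]=\lambda\mathbf{z}^*$. If we define $\zeta(\mathbf{x}')\triangleq\mathbf{z}^\intercal\boldsymbol{\beta}(\mathbf{x}')$, then $\zeta$ is a left eigenfunction of $\mathcal{K}$ with eigenvalue $\lambda$, i.e., $\mathcal{K}^*\zeta=\overline{\lambda}\zeta$.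
   Context: Let $\mathcal{X}\subseteq\mathbb{R}^d$, let $p(\mathbf{x}'|\mathbf{x})$ be the transition density of a time-homogeneous Markov process, and let $\rho_0,\rho_1$ be the distributions of the current and future states. The Koopman operator $\mathcal{K}\colon L^2_{\rho_1}(\mathcal{X})\to L^2_{\rho_0}(\mathcal{X})$ is $(\mathcal{K}g)(\mathbf{x})=\int k(\mathbf{x},\mathbf{x}')g(\mathbf{x}')\rho_1(\mathbf{x}')d\mathbf{x}'$ with kernel $k(\mathbf{x},\mathbf{x}')\triangleq p(\mathbf{x}'|\mathbf{x})/\rho_1(\mathbf{x}')$, and its adjoint is $(\mathcal{K}^*f)(\mathbf{x}')=\int k(\mathbf{x},\mathbf{x}')f(\mathbf{x})\rho_0(\mathbf{x})d\mathbf{x}$. Assume the operator has finite rank with factorized kernel $k(\mathbf{x},\mathbf{x}')=\boldsymbol{\alpha}(\mathbf{x})^\intercal\boldsymbol{\beta}(\mathbf{x}')=\sum_{i=1}^r\alpha_i(\mathbf{x})\beta_i(\mathbf{x}')$. *)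

From HB Require Import structures.
From mathcomp Require Import all_boot all_order all_algebra.
From mathcomp Require Import all_classical all_reals all_analysis.
From mathcomp Require Import complex.
Set Implicit Arguments. Unset Strict Implicit. Unset Printing Implicit Defensive.
Import Order.TTheory GRing.Theory Num.Theory.
Local Open Scope ring_scope.
Local Open Scope classical_set_scope.

Section Defs.
Context {dT : measure_display} {T : measurableType dT} {R : realType}.

Definition cintegral (mu : {measure set T -> \bar R}) (f : T -> R[i]) : R[i] :=
  Complex (Rintegral mu setT (fun x => complex.Re (f x)))
          (Rintegral mu setT (fun x => complex.Im (f x))).

(* Adjoint Koopman operator with (real) kernel k, acting on complex functions:
   (K^* f)(x') = \int k(x,x') f(x) rho_0(x) dx, where P0 is the law rho_0. *)
Definition koopman_adj (P0 : {measure set T -> \bar R}) (k : T -> T -> R)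
  (f : T -> R[i]) : T -> R[i] :=
  fun x' => cintegral P0 (fun x => (k x x')%:C%C * f x).

Definition Mrho {r : nat} (P0 : {measure set T -> \bar R})
  (beta alpha : 'I_r -> T -> R) : 'M[R]_r :=
  \matrix_(i, j) Rintegral P0 setT (fun x => beta i x * alpha j x).

End Defs.

From HB Require Import structures.
From mathcomp Require Import all_boot all_order all_algebra.
From mathcomp Require Import all_classical all_reals all_analysis.
From mathcomp Require Import complex.
From mathcomp Require Import ring.
Import Order.TTheory GRing.Theory Num.Theory.
Local Open Scope ring_scope.
Local Open Scope classical_set_scope.

(* For a kernel k = alpha^T beta of rank r, the adjoint K^* maps the span of
   the beta_i into itself: expanding k and exchanging the finite sums with the
   integral turns K^* (z^T beta) into (M^T z)^T beta, with
   M = E_rho0[beta alpha^T].  Conjugating and transposing z^* M = lambda z^*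
   gives M^T z = conj(lambda) z because M is real, hence
   K^* zeta = conj(lambda) zeta. *)

Section finite_combinations.
Context {dT : measure_display} {T : measurableType dT} {R : realType}.
Variable mu : {measure set T -> \bar R}.

Lemma integrable_sumEFin (I : Type) (s : seq I) (g : I -> T -> R) :
  (forall i, mu.-integrable setT (EFin \o g i)) ->
  mu.-integrable setT (EFin \o fun x => \sum_(i <- s) g i x).
Proof.
move=> hg; apply: (eq_integrable measurableT (fun x => \sum_(i <- s) (g i x)%:E)%E).
  by move=> x _; rewrite /= sumEFin.
by apply: integrable_sum => // i _; exact: hg.
Qed.

Lemma Rintegral_sum (I : Type) (s : seq I) (g : I -> T -> R) :
  (forall i, mu.-integrable setT (EFin \o g i)) ->
  Rintegral mu setT (fun x => \sum_(i <- s) g i x)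
  = \sum_(i <- s) Rintegral mu setT (g i).
Proof.
move=> hg; elim: s => [|a s IH].
  under eq_Rintegral do rewrite big_nil.
  by rewrite big_nil (Rintegral_cst _ measurableT 0) mul0r.
under eq_Rintegral do rewrite big_cons.
by rewrite RintegralD // ?big_cons ?IH //; exact: integrable_sumEFin.
Qed.

Lemma Rintegral_lincomb (I : Type) (s : seq I) (c : I -> R) (g : I -> T -> R) :
  (forall i, mu.-integrable setT (EFin \o g i)) ->
  Rintegral mu setT (fun x => \sum_(i <- s) c i * g i x)
  = \sum_(i <- s) c i * Rintegral mu setT (g i).
Proof.
move=> hg; rewrite (@Rintegral_sum _ s (fun i x => c i * g i x)).
  by apply: eq_bigr => i _; rewrite RintegralZl.
move=> i; apply: (eq_integrable measurableT (fun x => (c i)%:E * (EFin \o g i) x)%E).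
  by move=> x _; rewrite /= EFinM.
exact: integrableZl.
Qed.

Lemma cintegral_lincomb (I : Type) (s : seq I) (c : I -> R[i]) (g : I -> T -> R) :
  (forall i, mu.-integrable setT (EFin \o g i)) ->
  cintegral mu (fun x => \sum_(i <- s) c i * (g i x)%:C%C)
  = \sum_(i <- s) c i * (Rintegral mu setT (g i))%:C%C.
Proof.
move=> hg; rewrite /cintegral; apply/eqP; rewrite eq_complex /=.
have ReE (a : I -> R) : complex.Re (\sum_(i <- s) c i * (a i)%:C%C)
                        = \sum_(i <- s) complex.Re (c i) * a i.
  rewrite (linear_sum (@complex.Re R : Rcomplex R -> R)) /=.
  by apply: eq_bigr => i _; case: (c i) => u v /=; rewrite mulr0 subr0.
have ImE (a : I -> R) : complex.Im (\sum_(i <- s) c i * (a i)%:C%C)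
                        = \sum_(i <- s) complex.Im (c i) * a i.
  rewrite (linear_sum (@complex.Im R : Rcomplex R -> R)) /=.
  by apply: eq_bigr => i _; case: (c i) => u v /=; rewrite mulr0 add0r mulrC.
apply/andP; split; apply/eqP.
- by under eq_Rintegral do rewrite (ReE (g^~ _)); rewrite ReE Rintegral_lincomb.
- by under eq_Rintegral do rewrite (ImE (g^~ _)); rewrite ImE Rintegral_lincomb.
Qed.

End finite_combinations.

Lemma conj_left_eigenvector {R : rcfType} {n : nat} {M : 'M[R]_n}
    {z : 'cV[R[i]]_n} {lambda : R[i]} :
  (map_mx conjc z)^T *m map_mx (fun a : R => a%:C%C) M
    = lambda *: (map_mx conjc z)^T ->
  (map_mx (fun a : R => a%:C%C) M)^T *m z = conjc lambda *: z.
Proof.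
have conj_realK : map_mx conjc (map_mx (fun a : R => a%:C%C) M)
                  = map_mx (fun a : R => a%:C%C) M.
  by apply/matrixP => i j; rewrite !mxE conjc_real.
have conjK : map_mx conjc (map_mx conjc z)^T = z^T.
  by apply/matrixP => i j; rewrite !mxE conjcK.
move=> /(congr1 (fun A => (map_mx conjc A)^T)).
by rewrite map_mxM map_mxZ conjK conj_realK trmx_mul !trmxK linearZ /= trmxK.
Qed.

Lemma koopman_adj_span {dT : measure_display} {T : measurableType dT}
    {R : realType} (mu : {measure set T -> \bar R}) {r : nat}
    {alpha beta : 'I_r -> T -> R} {k : T -> T -> R} :
  (forall x x', k x x' = \sum_(i < r) alpha i x * beta i x') ->
  (forall i j, mu.-integrable setT (fun x => (beta i x * alpha j x)%:E)) ->
  forall (z : 'cV[R[i]]_r) (x' : T),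
  koopman_adj mu k (fun x => \sum_(i < r) z i 0 * (beta i x)%:C%C) x'
  = \sum_(i < r) ((map_mx (fun a : R => a%:C%C) (Mrho mu beta alpha))^T *m z) i 0
                 * (beta i x')%:C%C.
Proof.
move=> hk hint z x'; rewrite /koopman_adj.
have -> : (fun x => (k x x')%:C%C * \sum_(j < r) z j 0 * (beta j x)%:C%C)
  = fun x => \sum_(p : 'I_r * 'I_r)
               (z p.2 0 * (beta p.1 x')%:C%C) * (beta p.2 x * alpha p.1 x)%:C%C.
  apply: funext => x; rewrite hk rmorph_sum mulr_suml.
  rewrite -(pair_bigA _ (fun i j =>
    z j 0 * (beta i x')%:C%C * (beta j x * alpha i x)%:C%C)) /=.
  apply: eq_bigr => i _; rewrite mulr_sumr; apply: eq_bigr => j _.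
  by rewrite !rmorphM /=; ring.
rewrite cintegral_lincomb; last by move=> p; exact: hint.
rewrite -(pair_bigA _ (fun i j => z j 0 * (beta i x')%:C%C
                      * (Rintegral mu setT (fun x => beta j x * alpha i x))%:C%C)) /=.
apply: eq_bigr => i _.
rewrite !mxE mulr_suml; apply: eq_bigr => j _.
by rewrite !mxE; ring.
Qed.

Theorem theoremC3 (R : realType) (dT : measure_display) (T : measurableType dT)
  (P0 : probability T R) (r : nat)
  (alpha beta : 'I_r -> T -> R) (k : T -> T -> R)
  (hk : forall x x', k x x' = \sum_(i < r) alpha i x * beta i x')
  (hint : forall i j, P0.-integrable setT (fun x => (beta i x * alpha j x)%:E))
  (z : 'cV[R[i]]_r) (lambda : R[i]) (hz0 : z != 0)
  (heig : (map_mx conjc z)^T *m map_mx (fun a : R => a%:C%C) (Mrho P0 beta alpha)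
          = lambda *: (map_mx conjc z)^T) :
  let zeta := fun x' : T => \sum_(i < r) z i 0 * (beta i x')%:C%C in
  forall x' : T, koopman_adj P0 k zeta x' = conjc lambda * zeta x'.
Proof.
move=> zeta x'.
rewrite (koopman_adj_span P0 hk hint) (conj_left_eigenvector heig) /zeta.
rewrite mulr_sumr.
by apply: eq_bigr => i _; rewrite mxE mulrA.
Qed.
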